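(* Let $X$ be a locally connected space and let $\mathcal{G}, \mathcal{F}, \mathcal{F}'$ be locally constant sheaves of $k$-vector spaces on $X$. Let $\Phi = (\Phi_x)_{x\in X}$ be a stalkwise isomorphism $\mathcal{G}\to\mathcal{F}$ and $\Psi = (\Psi_x)_{x\in X}$ a stalkwise isomorphism $\mathcal{G}\to\mathcal{F}'$, and suppose $\Phi$ and $\Psi$ have the same deviation, i.e. for all $x,y\in X$ and every connected open set $U\ni x,y$ which is simple for all three sheaves, $\upsilon(\Phi)^U_{yx} = \upsilon(\Psi)^U_{yx}$. Then there is a unique isomorphism of sheaves $T\colon \mathcal{F}\to\mathcal{F}'$ such that $\Psi_x = T_x\Phi_x$ for all $x\in X$.
   Context: An open set $U$ is simple for a sheaf $\mathcal{S}$ if $\mathcal{S}|_U$ is isomorphic to a constant sheaf; if $U$ is also connected, each stalk restriction $\mathcal{S}_{x\in U}\colon \mathcal{S}(U)\to\mathcal{S}_x$ ($x\in U$) is an isomorphism. A stalkwise isomorphism $\Phi\colon\mathcal{G}\to\mathcal{F}$ is a family of linear isomorphisms $\Phi_x\colon\mathcal{G}_x\to\mathcal{F}_x$, $x\in X$, not required to be natural. Its deviation assigns to $x,y\in X$ and a connected open $U\ni x,y$ simple for $\mathcal{G}$ and $\mathcal{F}$ the automorphism $\upsilon(\Phi)^U_{yx} = \mathcal{G}_{y\in U}^{-1}\,\Phi_y^{-1}\,\mathcal{F}_{y\in U}\,\mathcal{F}_{x\in U}^{-1}\,\Phi_x\,\mathcal{G}_{x\in U}$ of $\mathcal{G}(U)$.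 *)

From HB Require Import structures.
From mathcomp Require Import all_boot all_algebra.
From Stdlib Require Import ClassicalEpsilon.
Set Implicit Arguments. Unset Strict Implicit. Unset Printing Implicit Defensive.
Import GRing.Theory.
Local Open Scope ring_scope.

Record topology (X : Type) := Topology {
  is_open : (X -> Prop) -> Prop;
  open_full : is_open (fun _ => True);
  open_inter : forall U V, is_open U -> is_open V -> is_open (fun x => U x /\ V x);
  open_union : forall (I : Type) (F : I -> X -> Prop),
      (forall i, is_open (F i)) -> is_open (fun x => exists i, F i x) }.

Record opens (X : Type) (tX : topology X) := Opens {
  oset : X -> Prop;
  oopen : is_open tX oset }.

Definition otop X (tX : topology X) : opens tX := Opens (open_full tX).
Definition ointer X (tX : topology X) (U V : opens tX) : opens tX :=
  Opens (open_inter (oopen U) (oopen V)).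

Definition osubset X (tX : topology X) (U V : opens tX) : Prop :=
  forall x, oset U x -> oset V x.

Lemma osubset_interl X (tX : topology X) (U V : opens tX) : osubset (ointer U V) U.
Proof. by move=> x []. Qed.
Lemma osubset_interr X (tX : topology X) (U V : opens tX) : osubset (ointer U V) V.
Proof. by move=> x []. Qed.

Definition connected X (tX : topology X) (U : opens tX) : Prop :=
  forall A B : opens tX,
    (forall y, oset U y -> oset A y \/ oset B y) ->
    (forall y, oset U y -> oset A y -> oset B y -> False) ->
    (forall y, oset U y -> oset A y) \/ (forall y, oset U y -> oset B y).

Definition locally_connected X (tX : topology X) : Prop :=
  forall (x : X) (V : opens tX), oset V x ->
    exists U : opens tX, [/\ oset U x, osubset U V & connected U].

Record presheaf (k : fieldType) X (tX : topology X) := Presheaf {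
  sec : opens tX -> lmodType k;
  res : forall U V : opens tX, osubset U V -> sec V -> sec U;
  res_linear : forall U V (h : osubset U V), linear (res h);
  res_id : forall U (h : osubset U U) s, res h s = s;
  res_comp : forall U V W (h1 : osubset U V) (h2 : osubset V W) (h3 : osubset U W) s,
      res h1 (res h2 s) = res h3 s }.

(* Stalk of a presheaf at x, given by the standard concrete description of the
   filtered colimit colim_{U ∋ x} F(U): a vector space with linear germ maps
   compatible with restrictions, jointly surjective, and such that two sections
   have the same germ iff they agree on a smaller neighbourhood of x.
   (This determines the stalk up to unique isomorphism.) *)
Record stalk (k : fieldType) X (tX : topology X) (F : presheaf k tX) (x : X) := Stalk {
  st : lmodType k;
  germ : forall U : opens tX, oset U x -> sec F U -> st;
  germ_linear : forall U (hx : oset U x), linear (germ hx);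
  germ_res : forall U V (h : osubset U V) (hxU : oset U x) (hxV : oset V x) s,
      germ hxU (res h s) = germ hxV s;
  germ_surj : forall v : st, exists U (hx : oset U x) s, germ hx s = v;
  germ_eq : forall U V (hxU : oset U x) (hxV : oset V x) s t,
      germ hxU s = germ hxV t ->
      exists W (hWU : osubset W U) (hWV : osubset W V), oset W x /\ res hWU s = res hWV t }.

Record sheaf (k : fieldType) X (tX : topology X) := Sheaf {
  psh : presheaf k tX;
  locality : forall (U : opens tX) (I : Type) (V : I -> opens tX)
      (hV : forall i, osubset (V i) U),
      (forall x, oset U x -> exists i, oset (V i) x) ->
      forall s t : sec psh U, (forall i, res (hV i) s = res (hV i) t) -> s = t;
  gluing : forall (U : opens tX) (I : Type) (V : I -> opens tX)
      (hV : forall i, osubset (V i) U),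
      (forall x, oset U x -> exists i, oset (V i) x) ->
      forall si : forall i, sec psh (V i),
      (forall i j, res (@osubset_interl X tX (V i) (V j)) (si i)
                   = res (@osubset_interr X tX (V i) (V j)) (si j)) ->
      exists s : sec psh U, forall i, res (hV i) s = si i;
  stalks : forall x : X, stalk psh x }.

Definition stalk_at k X (tX : topology X) (S : sheaf k tX) (x : X) : lmodType k :=
  st (stalks S x).
Definition germ_at k X (tX : topology X) (S : sheaf k tX) (x : X) (U : opens tX)
  (hx : oset U x) : sec (psh S) U -> stalk_at S x := germ (stalks S x) hx.
Arguments germ_at {k X tX} S {x U} hx.

Definition loc_const_on X (tX : topology X) (W : opens tX) (A : Type) (f : X -> A) : Prop :=
  forall y, oset W y ->
    exists V : opens tX, [/\ oset V y, osubset V W & forall z, oset V z -> f z = f y].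

(* U is simple for S: S|_U is isomorphic to the constant sheaf A_U with some
   value A, whose sections over W ⊆ U are the locally constant functions W -> A.
   The isomorphism is written out: phi W : S(W) -> (locally constant W -> A)
   (functions on X, only their values on W matter) is linear, injective,
   surjective onto locally constant functions, and natural in W. *)
Definition simple k X (tX : topology X) (S : sheaf k tX) (U : opens tX) : Prop :=
  exists (A : lmodType k)
         (phi : forall W : opens tX, osubset W U -> sec (psh S) W -> X -> A),
  [/\ (forall W h (a : k) s t y, oset W y ->
          phi W h (a *: s + t) y = a *: phi W h s y + phi W h t y),
      (forall W h s, loc_const_on W (phi W h s)),
      (forall W h s t, (forall y, oset W y -> phi W h s y = phi W h t y) -> s = t),
      (forall W h (f : X -> A), loc_const_on W f ->
          exists s, forall y, oset W y -> phi W h s y = f y) &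
      (forall W W' (h : osubset W U) (h' : osubset W' U) (hWW : osubset W' W) s y,
          oset W' y -> phi W' h' (res hWW s) y = phi W h s y)].

Definition locally_constant k X (tX : topology X) (S : sheaf k tX) : Prop :=
  forall x : X, exists U : opens tX, oset U x /\ simple S U.

Definition stalkwise_iso k X (tX : topology X) (G F : sheaf k tX)
  (Phi : forall x, stalk_at G x -> stalk_at F x) : Prop :=
  forall x, linear (Phi x) /\ bijective (Phi x).

(* a (classical) inverse of f; it is the genuine inverse whenever f is bijective *)
Definition finv (A B : Type) (a0 : A) (f : A -> B) (b : B) : A :=
  epsilon (inhabits a0) (fun a => f a = b).

(* upsilon(Phi)^U_{yx} = G_{y∈U}^{-1} Phi_y^{-1} F_{y∈U} F_{x∈U}^{-1} Phi_x G_{x∈U} *)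
Definition deviation k X (tX : topology X) (G F : sheaf k tX)
  (Phi : forall x, stalk_at G x -> stalk_at F x) (U : opens tX) (x y : X)
  (hx : oset U x) (hy : oset U y) (s : sec (psh G) U) : sec (psh G) U :=
  finv 0 (germ_at G hy)
    (finv 0 (Phi y)
       (germ_at F hy (finv 0 (germ_at F hx) (Phi x (germ_at G hx s))))).

Definition is_sheaf_iso k X (tX : topology X) (F F' : sheaf k tX)
  (T : forall U, sec (psh F) U -> sec (psh F') U) : Prop :=
  [/\ (forall U, linear (T U)),
      (forall U V (h : osubset U V) s, T U (res h s) = res h (T V s)) &
      (forall U, bijective (T U))].

Record germ_rep k X (tX : topology X) (F : sheaf k tX) (x : X) := GermRep {
  gr_U : opens tX; gr_hx : oset gr_U x; gr_s : sec (psh F) gr_U }.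

Definition stalk_map k X (tX : topology X) (F F' : sheaf k tX)
  (T : forall U, sec (psh F) U -> sec (psh F') U) (x : X) (v : stalk_at F x)
  : stalk_at F' x :=
  let r := epsilon (inhabits (@GermRep k X tX F x (otop tX) I 0))
             (fun r => germ_at F (gr_hx r) (gr_s r) = v) in
  germ_at F' (gr_hx r) (T (gr_U r) (gr_s r)).
Arguments stalk_map {k X tX F F'} T x v.

From Pilot Require Import Defs.
From HB Require Import structures.
From mathcomp Require Import all_boot all_algebra.
From Stdlib Require Import ClassicalEpsilon ProofIrrelevance Classical.
Set Implicit Arguments. Unset Strict Implicit. Unset Printing Implicit Defensive.
Local Open Scope ring_scope.

(* On a connected open set [V] simple for all three sheaves, the germ maps at
   every point of [V] are isomorphisms, so the stalk isomorphism
   [Theta_x = Psi_x Phi_x^-1 : F_x -> F'_x] can be pulled back to a map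
   [F(V) -> F'(V)] through the germ maps at [x].  Equality of the deviations of
   [Phi] and [Psi] says exactly that this map does not depend on [x].  Hence
   [Theta] is locally induced by maps of sections, and these glue to a morphism
   of sheaves [T] with stalks [Theta]; the same argument for [Psi], [Phi] gives
   its inverse.  Uniqueness holds because a sheaf morphism is determined by its
   stalk maps. *)

Lemma finv_spec (A B : Type) (a0 : A) (f : A -> B) b :
  (exists a, f a = b) -> f (Defs.finv a0 f b) = b.
Proof. exact: (epsilon_spec (inhabits a0) (fun a => f a = b)). Qed.

Lemma finvK (A B : Type) (a0 : A) (f : A -> B) : injective f -> cancel f (Defs.finv a0 f).
Proof. by move=> f_inj a; apply: f_inj; apply: finv_spec; exists a. Qed.

Lemma finvKV (A B : Type) (a0 : A) (f : A -> B) :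
  (forall b, exists a, f a = b) -> cancel (Defs.finv a0 f) f.
Proof. by move=> f_surj b; apply: finv_spec. Qed.

Lemma bij_surj (A B : Type) (f : A -> B) : bijective f -> forall b, exists a, f a = b.
Proof. by case=> g _ gK b; exists (g b). Qed.

Lemma linear_finv (k : fieldType) (A B : lmodType k) (f : A -> B) :
  linear f -> bijective f -> linear (Defs.finv 0 f).
Proof.
move=> f_lin f_bij a u v; have f_surj := bij_surj f_bij.
by apply: (bij_inj f_bij); rewrite f_lin !(finvKV 0 f_surj).
Qed.

Section Sheaves.
Variables (k : fieldType) (X : Type) (tX : topology X).

Lemma res_irrel (P : presheaf k tX) (U V : opens tX) (h1 h2 : osubset U V) (s : sec P V) :
  res h1 s = res h2 s.
Proof. by rewrite (proof_irrelevance _ h1 h2). Qed.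

Lemma osubset_trans (U V W : opens tX) : osubset U V -> osubset V W -> osubset U W.
Proof. by move=> hUV hVW x /hUV /hVW. Qed.

Lemma eq_section_germ (S : sheaf k tX) (W : opens tX) (s t : sec (psh S) W) :
  (forall x (hx : oset W x), germ_at S hx s = germ_at S hx t) -> s = t.
Proof.
move=> st_germ.
pose I := {V : opens tX | osubset V W /\ forall h : osubset V W, res h s = res h t}.
apply: (@locality _ _ _ S W I (fun i => proj1_sig i) (fun i => proj1 (proj2_sig i))).
  move=> x hx; have [V [hVW [hVW' [hxV st_V]]]] := germ_eq (st_germ x hx).
  have st_V' : forall h : osubset V W, res h s = res h t.
    by move=> h; rewrite (res_irrel h hVW) st_V (res_irrel hVW' h).
  by exists (exist _ V (conj hVW st_V')).
by move=> [V [hVW st_V]] /=; apply: st_V.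
Qed.

Definition ounion (Q : opens tX -> Prop) : opens tX :=
  Opens (@open_union _ tX {V | Q V} (fun i => oset (proj1_sig i))
                     (fun i => oopen (proj1_sig i))).

Lemma ounionP Q y : oset (ounion Q) y <-> exists V, Q V /\ oset V y.
Proof.
split; first by move=> [[V hV] /= hy]; exists V.
by move=> [V [hV hy]]; exists (exist _ V hV).
Qed.

Lemma loc_const_connected (A : Type) (U : opens tX) (f : X -> A) x :
  connected U -> loc_const_on U f -> oset U x -> forall y, oset U y -> f y = f x.
Proof.
move=> U_conn f_lc hx.
pose OA := ounion (fun V => forall z, oset V z -> oset U z /\ f z = f x).
pose OB := ounion (fun V => forall z, oset V z -> oset U z /\ f z <> f x).
have cover : forall y, oset U y -> oset OA y \/ oset OB y.
  move=> y hy; have [V [hyV hVU f_V]] := f_lc y hy.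
  case: (classic (f y = f x)) => fy; [left | right]; apply/ounionP; exists V;
    by split=> // z hz; split; [exact: hVU | rewrite f_V].
have disj : forall y, oset U y -> oset OA y -> oset OB y -> False.
  move=> y _ /ounionP [V1 [f_V1 hy1]] /ounionP [V2 [f_V2 hy2]].
  by have [_ e1] := f_V1 y hy1; have [_ []] := f_V2 y hy2.
case: (U_conn OA OB cover disj) => U_sub y hy.
  by have /ounionP [V [f_V hyV]] := U_sub y hy; have [] := f_V y hyV.
by have /ounionP [V [f_V hxV]] := U_sub x hx; have [_ []] := f_V x hxV.
Qed.

Lemma simple_sub (S : sheaf k tX) (U V : opens tX) :
  osubset V U -> simple S U -> simple S V.
Proof.
move=> hVU [A [phi [phi_lin phi_lc phi_inj phi_surj phi_nat]]].
exists A, (fun W (h : osubset W V) => phi W (fun z hz => hVU z (h z hz))).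
split=> [W h | W h | W h | W h | W W' h h' hWW s y hy].
- exact: phi_lin.
- exact: phi_lc.
- exact: phi_inj.
- exact: phi_surj.
- exact: phi_nat.
Qed.

Lemma locally_constant_nbhd (S : sheaf k tX) : locally_constant S ->
  forall x (W : opens tX), oset W x -> exists V, [/\ oset V x, osubset V W & simple S V].
Proof.
move=> S_lc x W hxW; have [U [hxU S_U]] := S_lc x.
exists (ointer W U); split=> //; first exact: osubset_interl.
exact: simple_sub (@osubset_interr _ _ W U) S_U.
Qed.

(* Sections over a connected simple set are constant functions, so a section is
   determined by its germ at any point. *)
Lemma germ_simple_inj (S : sheaf k tX) (U : opens tX) x (hx : oset U x) :
  connected U -> simple S U -> injective (germ_at S hx).
Proof.
move=> U_conn [A [phi [_ phi_lc phi_inj _ phi_nat]]] s t st_x.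
have [W [hWU [hWU' [hxW st_W]]]] := germ_eq st_x.
have hUU : osubset U U by [].
apply: (phi_inj U hUU) => y hy.
rewrite (loc_const_connected U_conn (phi_lc U hUU s) hx hy).
rewrite (loc_const_connected U_conn (phi_lc U hUU t) hx hy).
rewrite -(phi_nat U W hUU hWU hWU s x hxW) -(phi_nat U W hUU hWU hWU t x hxW).
by rewrite st_W (res_irrel hWU' hWU).
Qed.

Arguments germ_simple_inj {S U x} hx.

Lemma germ_simple_surj (S : sheaf k tX) (U : opens tX) x (hx : oset U x) :
  simple S U -> forall v, exists s, germ_at S hx s = v.
Proof.
move=> [A [phi [_ phi_lc phi_inj phi_surj phi_nat]]] v.
have [V [hxV [s0 <-]]] := germ_surj v.
pose W := ointer V U.
have hWU : osubset W U := @osubset_interr _ _ V U.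
have hWV : osubset W V := @osubset_interl _ _ V U.
have hxW : oset W x by split.
pose s := res hWV s0.
have [V' [hxV' hV'W s_V']] := phi_lc W hWU s x hxW.
have hUU : osubset U U by [].
have c_lc : loc_const_on U (fun _ => phi W hWU s x).
  by move=> y hy; exists U; split.
have [c hc] := phi_surj U hUU _ c_lc.
exists c.
have hV'U := osubset_trans hV'W hWU.
rewrite /germ_at -(germ_res (stalks S x) hV'U hxV' hx) -(germ_res (stalks S x) hWV hxW hxV).
rewrite -(germ_res (stalks S x) hV'W hxV' hxW); congr germ.
apply: (phi_inj V' hV'U) => y hy.
rewrite (phi_nat U V' hUU hV'U hV'U c y hy) hc; last exact: hV'U.
by rewrite (phi_nat W V' hWU hV'U hV'W s y hy) s_V'.
Qed.

Arguments germ_simple_surj {S U x} hx.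

Definition natural_map (A B : sheaf k tX) (T : forall U, sec (psh A) U -> sec (psh B) U) :=
  forall U V (h : osubset U V) s, T U (res h s) = res h (T V s).

Lemma stalk_map_germ (A B : sheaf k tX) (T : forall U, sec (psh A) U -> sec (psh B) U) :
  natural_map T -> forall x U (hx : oset U x) s,
  stalk_map T x (germ_at A hx s) = germ_at B hx (T U s).
Proof.
move=> T_nat x U hx s; rewrite /stalk_map.
set r := epsilon _ _.
have r_germ : germ_at A (gr_hx r) (gr_s r) = germ_at A hx s.
  apply: (epsilon_spec _ (fun r : germ_rep A x => germ_at A (gr_hx r) (gr_s r) = _)).
  by exists (GermRep hx s).
have [W [hW1 [hW2 [hxW rs_W]]]] := germ_eq r_germ.
rewrite /germ_at -(germ_res (stalks B x) hW1 hxW) -T_nat rs_W T_nat.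
by rewrite (germ_res (stalks B x) hW2 hxW).
Qed.

Section Lifting.
Variables (A B : sheaf k tX) (Th : forall x, stalk_at A x -> stalk_at B x).
Arguments Th : clear implicits.

Definition germwise (W : opens tX) (s : sec (psh A) W) (t : sec (psh B) W) : Prop :=
  forall x (hx : oset W x), germ_at B hx t = Th x (germ_at A hx s).

Definition locally_liftable : Prop :=
  forall x (W : opens tX), oset W x -> exists V : opens tX,
    [/\ oset V x, osubset V W & forall s : sec (psh A) V, exists t, germwise s t].

Lemma germwise_uniq W (s : sec (psh A) W) t1 t2 :
  germwise s t1 -> germwise s t2 -> t1 = t2.
Proof. by move=> st1 st2; apply: eq_section_germ => x hx; rewrite st1 st2. Qed.

Lemma germwise_res W V (h : osubset V W) (s : sec (psh A) W) t :
  germwise s t -> germwise (res h s) (res h t).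
Proof.
move=> st x hx; rewrite /germ_at (germ_res (stalks B x) h hx (h x hx)).
by rewrite (germ_res (stalks A x) h hx (h x hx)); exact: st.
Qed.

Hypothesis Th_lift : locally_liftable.

Lemma germwise_exists W (s : sec (psh A) W) : exists t, germwise s t.
Proof.
pose I := {V : opens tX | osubset V W /\ forall s : sec (psh A) V, exists t, germwise s t}.
pose V_ (i : I) := proj1_sig i.
pose hV (i : I) := proj1 (proj2_sig i).
pose t_ (i : I) := epsilon (inhabits 0) (germwise (res (hV i) s)).
have t_germ i : germwise (res (hV i) s) (t_ i).
  exact: (epsilon_spec (inhabits 0) (germwise (res (hV i) s)) (proj2 (proj2_sig i) _)).
have cover : forall x, oset W x -> exists i : I, oset (V_ i) x.
  move=> x hx; have [V [hxV hVW V_lift]] := Th_lift hx.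
  by exists (exist _ V (conj hVW V_lift)).
have [t t_res] : exists t : sec (psh B) W, forall i, res (hV i) t = t_ i.
  apply: (@gluing _ _ _ B W I V_ hV cover t_) => i j.
  apply: germwise_uniq (germwise_res _ (t_germ i)) _.
  have hIW := osubset_trans (@osubset_interl _ _ (V_ i) (V_ j)) (hV i).
  rewrite (res_comp _ _ hIW) -(res_comp (@osubset_interr _ _ (V_ i) (V_ j)) (hV j) hIW).
  exact: germwise_res (t_germ j).
exists t => x hx; have [i hxi] := cover x hx.
rewrite /germ_at -(germ_res (stalks B x) (hV i) hxi hx) -(germ_res (stalks A x) (hV i) hxi hx).
by rewrite t_res; exact: t_germ.
Qed.

Definition induced W (s : sec (psh A) W) : sec (psh B) W :=
  epsilon (inhabits 0) (germwise s).

Lemma induced_germwise W (s : sec (psh A) W) : germwise s (induced s).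
Proof. exact: (epsilon_spec (inhabits 0) (germwise s) (germwise_exists s)). Qed.

Lemma induced_natural : natural_map induced.
Proof.
move=> U V h s; apply: germwise_uniq (induced_germwise _) _.
exact/germwise_res/induced_germwise.
Qed.

Lemma induced_linear : (forall x, linear (Th x)) -> forall W, linear (@induced W).
Proof.
move=> Th_lin W a u v; apply: germwise_uniq (induced_germwise _) _ => x hx.
rewrite /germ_at !(germ_linear (stalks _ x)) -!/(germ_at _ hx _) !induced_germwise.
by rewrite Th_lin.
Qed.

Lemma induced_inj : (forall x, injective (Th x)) -> forall W, injective (@induced W).
Proof.
move=> Th_inj W s1 s2 s12; apply: eq_section_germ => x hx; apply: Th_inj.
by rewrite -!induced_germwise s12.
Qed.

Lemma stalk_map_induced x v : stalk_map induced x v = Th x v.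
Proof.
have [U [hx [s <-]]] := germ_surj v.
by rewrite (stalk_map_germ induced_natural hx s) induced_germwise.
Qed.

Lemma induced_unique (T : forall U, sec (psh A) U -> sec (psh B) U) :
  natural_map T -> (forall x v, stalk_map T x v = Th x v) ->
  forall U s, T U s = induced s.
Proof.
move=> T_nat T_stalk U s; apply: germwise_uniq (induced_germwise s) => x hx.
by rewrite -(stalk_map_germ T_nat) T_stalk.
Qed.

End Lifting.

Lemma induced_surj (A B : sheaf k tX) (Th : forall x, stalk_at A x -> stalk_at B x)
    (Th' : forall x, stalk_at B x -> stalk_at A x) :
  locally_liftable Th -> locally_liftable Th' -> (forall x, cancel (Th' x) (Th x)) ->
  forall W (t : sec (psh B) W), exists s, induced Th s = t.
Proof.
move=> Th_lift Th'_lift Th'K W t; have [s st] := germwise_exists Th'_lift t.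
exists s; apply: germwise_uniq (induced_germwise Th_lift s) _ => x hx.
by rewrite st Th'K.
Qed.

Lemma induced_bij (A B : sheaf k tX) (Th : forall x, stalk_at A x -> stalk_at B x)
    (Th' : forall x, stalk_at B x -> stalk_at A x) :
  locally_liftable Th -> locally_liftable Th' ->
  (forall x, cancel (Th x) (Th' x)) -> (forall x, cancel (Th' x) (Th x)) ->
  forall W, bijective (@induced A B Th W).
Proof.
move=> Th_lift Th'_lift ThK Th'K W; exists (Defs.finv 0 (@induced A B Th W)).
  by apply/finvK/(induced_inj Th_lift) => x; exact: can_inj (ThK x).
exact/finvKV/(induced_surj Th_lift Th'_lift).
Qed.

Definition transfer (G F F' : sheaf k tX) (Phi : forall x, stalk_at G x -> stalk_at F x)
    (Psi : forall x, stalk_at G x -> stalk_at F' x) x (v : stalk_at F x) : stalk_at F' x :=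
  Psi x (Defs.finv 0 (Phi x) v).
Arguments transfer {G F F'} Phi Psi x v.

Section Transport.
Variables (G F F' : sheaf k tX).
Variables (Phi : forall x, stalk_at G x -> stalk_at F x)
          (Psi : forall x, stalk_at G x -> stalk_at F' x).
Arguments Phi : clear implicits.
Arguments Psi : clear implicits.
Hypotheses (hPhi : stalkwise_iso Phi) (hPsi : stalkwise_iso Psi).

Lemma transferK x : cancel (transfer Phi Psi x) (transfer Psi Phi x).
Proof.
move=> v; have [_ Phi_bij] := hPhi x; have [_ Psi_bij] := hPsi x.
by rewrite /transfer (finvK 0 (bij_inj Psi_bij)) (finvKV 0 (bij_surj Phi_bij)).
Qed.

Lemma transfer_linear x : linear (transfer Phi Psi x).
Proof.
have [_ Phi_bij] := hPhi x; have [Psi_lin _] := hPsi x.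
move=> a u v; rewrite /transfer (linear_finv (proj1 (hPhi x)) Phi_bij).
exact: Psi_lin.
Qed.

Section OnSimpleConnected.
Variable V : opens tX.
Hypotheses (V_conn : connected V)
  (G_V : simple G V) (F_V : simple F V) (F'_V : simple F' V).
Hypothesis dev_V : forall x y (hx : oset V x) (hy : oset V y) s,
  deviation Phi hx hy s = deviation Psi hx hy s.

Definition transport x (hx : oset V x) (s : sec (psh F) V) : sec (psh F') V :=
  Defs.finv 0 (germ_at F' hx) (transfer Phi Psi x (germ_at F hx s)).

Lemma germ_transport x (hx : oset V x) s :
  germ_at F' hx (transport hx s) = transfer Phi Psi x (germ_at F hx s).
Proof. exact/finvKV/germ_simple_surj. Qed.

Lemma transport_base_indep x y (hx : oset V x) (hy : oset V y) s :
  transport hx s = transport hy s.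
Proof.
have [t Gt] := germ_simple_surj hx G_V (Defs.finv 0 (Phi x) (germ_at F hx s)).
have := dev_V hx hy t; rewrite /deviation Gt.
rewrite (finvKV 0 (bij_surj (proj2 (hPhi x)))) (finvK 0 (germ_simple_inj hx V_conn F_V)).
move/(congr1 (germ_at G hy)); rewrite !(finvKV 0 (germ_simple_surj hy G_V)).
move/(congr1 (Psi y)); rewrite (finvKV 0 (bij_surj (proj2 (hPsi y)))) => e.
by rewrite [RHS]/transport /transfer e (finvK 0 (germ_simple_inj hy V_conn F'_V)).
Qed.

End OnSimpleConnected.

Lemma transfer_locally_liftable :
  locally_connected tX -> locally_constant G -> locally_constant F -> locally_constant F' ->
  (forall x y (U : opens tX) (hx : oset U x) (hy : oset U y),
      connected U -> simple G U -> simple F U -> simple F' U ->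
      forall s, deviation Phi hx hy s = deviation Psi hx hy s) ->
  locally_liftable (transfer Phi Psi).
Proof.
move=> X_lc G_lc F_lc F'_lc dev_eq x W hxW.
have [V1 [hx1 hV1 G_V1]] := locally_constant_nbhd G_lc hxW.
have [V2 [hx2 hV2 F_V2]] := locally_constant_nbhd F_lc hx1.
have [V3 [hx3 hV3 F'_V3]] := locally_constant_nbhd F'_lc hx2.
have [V [hxV hV V_conn]] := X_lc x V3 hx3.
have hVV2 := osubset_trans hV hV3; have hVV1 := osubset_trans hVV2 hV2.
have G_V := simple_sub hVV1 G_V1; have F_V := simple_sub hVV2 F_V2.
have F'_V := simple_sub hV F'_V3.
exists V; split=> [//||s]; first exact: osubset_trans hVV1 hV1.
exists (transport hxV s) => y hy.
have dev_V x' y' hx' hy' := dev_eq x' y' V hx' hy' V_conn G_V F_V F'_V.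
rewrite (transport_base_indep V_conn G_V F_V F'_V dev_V hxV hy).
exact: germ_transport.
Qed.

End Transport.

End Sheaves.

Arguments transfer {k X tX G F F'} Phi Psi x v.

Theorem mainTheorem2 (k : fieldType) (X : Type) (tX : topology X)
  (G F F' : sheaf k tX)
  (hX : locally_connected tX)
  (hG : locally_constant G) (hF : locally_constant F) (hF' : locally_constant F')
  (Phi : forall x, stalk_at G x -> stalk_at F x)
  (Psi : forall x, stalk_at G x -> stalk_at F' x)
  (hPhi : stalkwise_iso Phi) (hPsi : stalkwise_iso Psi)
  (hdev : forall (x y : X) (U : opens tX) (hx : oset U x) (hy : oset U y),
      connected U -> simple G U -> simple F U -> simple F' U ->
      forall s, deviation Phi hx hy s = deviation Psi hx hy s) :
  exists T : forall U, sec (psh F) U -> sec (psh F') U,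
    [/\ is_sheaf_iso T,
        (forall x g, Psi x g = stalk_map T x (Phi x g)) &
        (forall T' : forall U, sec (psh F) U -> sec (psh F') U,
           is_sheaf_iso T' -> (forall x g, Psi x g = stalk_map T' x (Phi x g)) ->
           forall U s, T' U s = T U s)].
Proof.
have Th_lift := transfer_locally_liftable hPhi hPsi hX hG hF hF' hdev.
have Th'_lift : locally_liftable (transfer Psi Phi).
  apply: (transfer_locally_liftable hPsi hPhi hX hG hF' hF) => x y U hx hy U_conn G_U F'_U F_U s.
  exact/esym/hdev.
have Phi_K x : cancel (Phi x) (Defs.finv 0 (Phi x)) := finvK 0 (bij_inj (proj2 (hPhi x))).
exists (induced (transfer Phi Psi)); split.
- split; first exact: induced_linear Th_lift (transfer_linear hPhi hPsi).
    exact: induced_natural Th_lift.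
  exact: induced_bij Th_lift Th'_lift (transferK hPhi hPsi) (transferK hPsi hPhi).
- by move=> x g; rewrite (stalk_map_induced Th_lift) /transfer Phi_K.
- move=> T' [_ T'_nat _] T'_stalk U s; apply: induced_unique => // x v.
  have [g <-] := bij_surj (proj2 (hPhi x)) v.
  by rewrite -T'_stalk /transfer Phi_K.
Qed.
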